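(* Let $M$ be a $T_0$-algebra. The map $\theta:\mathrm{at}\,M\to\mathrm{pt}\,\mathcal O M$, $\theta(x)={\uparrow}x\cap\mathcal O M$, restricts and co-restricts to a homeomorphism $\theta':\mathrm{at}_D M\to\mathrm{pt}_D\mathcal O M$. In particular, for every locally closed atom $x$ of $M$, ${\uparrow}x\cap\mathcal O M$ is a slicing filter of $\mathcal O M$, and every slicing filter of $\mathcal O M$ is of this form for a unique locally closed atom $x$.
   Context: An MT-algebra is a pair $(M,\square)$ where $M$ is a complete boolean algebra and $\square:M\to M$ satisfies $\square 1=1$, $\square(a\wedge b)=\square a\wedge\square b$, $\square a\le a$, $\square a\le\square\square a$; $\Diamond a=\neg\square\neg a$; open: $\square a=a$; closed: $\Diamond a=a$; locally closed: $a=\square b\wedge\Diamond c$ for some $b,c$. $\mathcal O M$ is the frame of open elements. Saturated element: a meet of opens; weakly locally closed: $s\wedge c$ with $s$ saturated and $c$ closed; $M$ is a $T_0$-algebra if every element is a join of weakly locally closed elements. $\mathrm{at}\,M$ is the set of atoms of $M$ with topology $\{\eta_M(u):u\in\mathcal O M\}$ where $\eta_M(a)=\{x\in\mathrm{at}\,M:x\le a\}$; $\mathrm{at}_D M$ is the subspace of locally closed atoms. For a frame $L$, $\mathrm{pt}\,L$ is the space of completely prime filters with opens $\{P:a\in P\}$, $a\in L$. For elements $a<b$ of a poset, $a\lessdot b$ means there is no $x$ with $a<x<b$. A filter $F$ of $L$ is slicing if it is prime and there are $b\in F$, $a\notin F$ with $a\lessdot b$; $\mathrm{pt}_D L$ is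 the set of slicing filters (each is completely prime) with the subspace topology from $\mathrm{pt}\,L$, i.e. opens $\{F\in\mathrm{pt}_DL: a\in F\}$, $a\in L$. *)

From HB Require Import structures.
From mathcomp Require Import all_boot all_order.

Set Implicit Arguments.
Unset Strict Implicit.
Unset Printing Implicit Defensive.

Import Order.Theory.
Local Open Scope order_scope.

(* A boolean algebra is modelled by MathComp's ctbDistrLatticeType
   (complemented distributive lattice with top and bottom);
   completeness is an explicit hypothesis. *)
Section MT.
Context {d : Order.disp_t} {M : ctbDistrLatticeType d}.

Definition is_lub_in (P S : M -> Prop) (s : M) : Prop :=
  P s /\ (forall t, S t -> t <= s) /\
  (forall u, P u -> (forall t, S t -> t <= u) -> s <= u).
Definition is_glb_in (P S : M -> Prop) (s : M) : Prop :=
  P s /\ (forall t, S t -> s <= t) /\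
  (forall u, P u -> (forall t, S t -> u <= t) -> u <= s).

Definition allM : M -> Prop := fun _ => True.

Definition complete_BA : Prop :=
  (forall S : M -> Prop, exists s, is_lub_in allM S s) /\
  (forall S : M -> Prop, exists s, is_glb_in allM S s).

Definition is_MT_algebra (box : M -> M) : Prop :=
  [/\ complete_BA,
      box \top = \top,
      (forall a b, box (a `&` b) = box a `&` box b),
      (forall a, box a <= a) &
      (forall a, box a <= box (box a))].

Definition dia (box : M -> M) (a : M) : M := ~` (box (~` a)).
Definition is_open (box : M -> M) (a : M) : Prop := box a = a.
Definition is_closed (box : M -> M) (a : M) : Prop := dia box a = a.
Definition locally_closed (box : M -> M) (a : M) : Prop :=
  exists b c, a = box b `&` dia box c.
Definition saturated (box : M -> M) (s : M) : Prop :=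
  exists S : M -> Prop, (forall t, S t -> is_open box t) /\ is_glb_in allM S s.
Definition weakly_locally_closed (box : M -> M) (a : M) : Prop :=
  exists s c, [/\ saturated box s, is_closed box c & a = s `&` c].
Definition T0_algebra (box : M -> M) : Prop :=
  forall a, exists S : M -> Prop,
    (forall y, S y -> weakly_locally_closed box y) /\ is_lub_in allM S a.

Definition atom (x : M) : Prop :=
  x != \bot /\ (forall y, y <= x -> y = \bot \/ y = x).
Definition atom_D (box : M -> M) (x : M) : Prop := atom x /\ locally_closed box x.

Definition eta (a : M) : M -> Prop := fun x => atom x /\ x <= a.

Definition at_open (box : M -> M) (U : M -> Prop) : Prop :=
  exists u, is_open box u /\ forall x, U x <-> eta u x.

(* ---- the frame O M: filters are represented as predicates on M
   contained in the set of open elements ---- *)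
Definition filter_O (box : M -> M) (F : M -> Prop) : Prop :=
  [/\ (forall a, F a -> is_open box a),
      F \top,
      (forall a b, F a -> is_open box b -> a <= b -> F b) &
      (forall a b, F a -> F b -> F (a `&` b))].

(* completely prime filter of O M (joins taken in the frame O M) *)
Definition cp_filter (box : M -> M) (F : M -> Prop) : Prop :=
  filter_O box F /\
  (forall (S : M -> Prop) s, (forall t, S t -> is_open box t) ->
     is_lub_in (is_open box) S s -> F s -> exists t, S t /\ F t).

Definition prime_filter_O (box : M -> M) (F : M -> Prop) : Prop :=
  [/\ filter_O box F, ~ F \bot &
      (forall a b s, is_open box a -> is_open box b ->
         is_lub_in (is_open box) (fun t => t = a \/ t = b) s ->
         F s -> F a \/ F b)].

Definition covered_O (box : M -> M) (a b : M) : Prop :=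
  [/\ is_open box a, is_open box b, a < b &
      (forall x, is_open box x -> ~ (a < x /\ x < b))].

Definition slicing (box : M -> M) (F : M -> Prop) : Prop :=
  prime_filter_O box F /\
  exists a b, [/\ F b, is_open box a, ~ F a & covered_O box a b].

Definition pt_open (box : M -> M) (W : (M -> Prop) -> Prop) : Prop :=
  exists a, is_open box a /\ forall P, W P <-> (cp_filter box P /\ P a).

Definition theta (box : M -> M) (x : M) : M -> Prop :=
  fun a => is_open box a /\ x <= a.

End MT.

Definition subspace_open {X : Type} (op : (X -> Prop) -> Prop) (A : X -> Prop)
  (U : X -> Prop) : Prop :=
  exists V, op V /\ forall x, U x <-> (V x /\ A x).

Definition homeomorphism_between {X Y : Type}
  (opA : (X -> Prop) -> Prop) (A : X -> Prop)
  (opB : (Y -> Prop) -> Prop) (B : Y -> Prop) (f : X -> Y) : Prop :=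
  [/\ (forall x, A x -> B (f x)),
      (forall x y, A x -> A y -> f x = f y -> x = y),
      (forall y, B y -> exists x, A x /\ f x = y),
      (forall W, opB W -> opA (fun x => A x /\ W (f x))) &
      (forall U, opA U -> (forall x, U x -> A x) ->
         opB (fun y => exists x, U x /\ f x = y))].

From Pilot Require Import Defs.
From HB Require Import structures.
From mathcomp Require Import all_boot all_order.
From Stdlib Require Import Classical FunctionalExtensionality PropExtensionality.
Set Implicit Arguments.
Unset Strict Implicit.
Unset Printing Implicit Defensive.

Import Order.Theory.
Local Open Scope order_scope.

(* For an atom x, the open elements above x form a completely prime filter,
   and when x = box p `&` dia q is locally closed this filter is slicing,
   witnessed by the covering (box p `&` ~` x) < box p of opens. Conversely,
   a slicing filter F with witnesses a < b (a not in F, b in F) determines the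
   "gap" c = b `&` ~` a: every open element either lies above c or is disjoint
   from it, and F consists exactly of the opens above c. The T0 axiom makes
   c an atom, because the only nonzero weakly locally closed element below such
   a c is c itself; c = box b `&` dia (~` a) is locally closed. A locally closed
   atom is determined by the opens above it, which gives injectivity, and both
   topologies are generated by the same open elements, so theta is a
   homeomorphism. *)

Section BooleanAlgebra.
Context {d : Order.disp_t} {M : ctbDistrLatticeType d}.
Implicit Types (a b c p q s t u w x y : M).

Lemma le_le_compl_eq0 x y : x <= y -> x <= ~` y -> x = \bot.
Proof.
move=> xy xny; have : x <= y `&` ~` y by rewrite lexI xy xny.
by rewrite meetxC lex0 => /eqP.
Qed.

Lemma disj_le_compl x t : x `&` t = \bot -> t <= ~` x.
Proof. by move=> e; rewrite -disj_leC meetC e. Qed.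

Lemma atom_le_or_disj x t : atom x -> x <= t \/ x `&` t = \bot.
Proof.
case=> _ H; case: (H (x `&` t) (leIl _ _)) => e; [right|left] => //.
exact/meet_idPl.
Qed.

Lemma atom_not_le_compl x t : atom x -> x <= t -> ~ x <= ~` t.
Proof. by case=> /eqP nx _ xt /(le_le_compl_eq0 xt)/nx. Qed.

Section MTAlgebra.
Variable box : M -> M.
Hypothesis MT : is_MT_algebra box.
Local Notation open := (is_open box).

Lemma le_box a b : a <= b -> box a <= box b.
Proof. by case: MT => _ _ boxI _ _ /meet_idPl <-; rewrite boxI leIr. Qed.

Lemma open_box a : open (box a).
Proof. by case: MT => _ _ _ box_le box4; apply/le_anti; rewrite box_le box4. Qed.

Lemma openI a b : open a -> open b -> open (a `&` b).
Proof. by case: MT => _ _ boxI _ _ oa ob; rewrite /is_open boxI oa ob. Qed.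

Lemma openU a b : open a -> open b -> open (a `|` b).
Proof.
case: MT => _ _ _ box_le _ oa ob; apply/le_anti; rewrite box_le /= leUx.
by rewrite -{1}oa -{2}ob !le_box ?leUl ?leUr.
Qed.

Lemma open_compl_dia q : open (~` dia box q).
Proof. by rewrite /dia complK; exact: open_box. Qed.

Lemma dia_compl_open a : open a -> dia box (~` a) = ~` a.
Proof. by rewrite /is_open /dia complK => ->. Qed.

Lemma closed_open_compl k : is_closed box k -> open (~` k).
Proof. by move=> <-; exact: open_compl_dia. Qed.

Lemma lub_open S j : (forall t, S t -> open t) -> is_lub_in allM S j -> open j.
Proof.
case: MT => _ _ _ box_le _ So [_ [ubj lubj]]; apply/le_anti; rewrite box_le /=.
by apply: lubj => // t St; rewrite -(So t St) le_box ?ubj.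
Qed.

Section Theta.
Variable x : M.
Hypothesis atom_x : atom x.

Lemma theta_filter : filter_O box (theta box x).
Proof.
case: (MT) => _ box1 _ _ _; split.
- by move=> a [].
- by rewrite /theta /is_open box1 lex1.
- by move=> a b [_ xa] ob ab; split => //; exact: le_trans ab.
- by move=> a b [oa xa] [ob xb]; split; [exact: openI | rewrite lexI xa xb].
Qed.

Lemma theta_cp : cp_filter box (theta box x).
Proof.
split; first exact: theta_filter.
move=> S s So [_ [_ lub_s]] [_ xs]; apply: NNPP => noS.
case: MT => [[lubM _] _ _ _ _]; have [j lub_j] := lubM S.
(* the join in M of opens is open, hence above their join in the frame O M *)
have sj : s <= j by apply: lub_s; [exact: lub_open lub_j | case: lub_j => _ []].
have jnx : j <= ~` x.
  case: lub_j => _ [_ lub_j]; apply: lub_j => // t St.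
  case: (atom_le_or_disj t atom_x) => [xt|]; last exact: disj_le_compl.
  by case: noS; exists t; split => //; split => //; exact: So.
exact: (atom_not_le_compl atom_x (lexx x) (le_trans xs (le_trans sj jnx))).
Qed.

Lemma theta_prime : prime_filter_O box (theta box x).
Proof.
split; first exact: theta_filter.
- by case=> _; rewrite lex0; case: atom_x => /negbTE ->.
- move=> a b s oa ob [_ [_ lub_s]] [_ xs].
  have xab : x <= a `|` b.
    apply: le_trans xs (lub_s _ (openU oa ob) _).
    by move=> t [->|->]; [exact: leUl | exact: leUr].
  case: (atom_le_or_disj a atom_x) => [xa|ea]; first by left.
  case: (atom_le_or_disj b atom_x) => [xb|eb]; first by right.
  case: atom_x => /eqP []; by rewrite -(meet_idPl xab) meetUr ea eb joinx0.
Qed.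

End Theta.

Lemma covered_compl_atom x b : atom x -> x <= b -> open b -> open (b `&` ~` x) ->
  covered_O box (b `&` ~` x) b.
Proof.
move=> atom_x xb ob oa; have ab : b `&` ~` x <= b by exact: leIl.
have abx : (b `&` ~` x) `|` x = b by rewrite joinIl joinCx meetx1; exact/join_idPl.
split => //.
- rewrite lt_def ab andbT; apply/eqP => e.
  by apply: (atom_not_le_compl atom_x (lexx x)); apply: le_trans xb _; rewrite e leIr.
- move=> w ow [aw wb]; case: (atom_le_or_disj w atom_x) => [xw|xw].
  + have : b <= w by rewrite -abx leUx xw ltW.
    by rewrite (lt_geF wb).
  + have : w <= b `&` ~` x by rewrite lexI ltW //= disj_le_compl.
    by rewrite (lt_geF aw).
Qed.


Lemma theta_slicing x : atom_D box x -> slicing box (theta box x).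
Proof.
move=> [atom_x [p [q ex]]]; split; first exact: theta_prime.
have xp : x <= box p by rewrite ex leIl.
have oa : open (box p `&` ~` x).
  by rewrite ex complI meetUr meetxC join0x; exact: openI (open_box _) (open_compl_dia _).
exists (box p `&` ~` x), (box p); split => //.
- by split; [exact: open_box | exact: xp].
- case=> _ xa; apply: (atom_not_le_compl atom_x (lexx x)).
  exact: le_trans xa (leIr _ _).
- exact: covered_compl_atom xp (open_box _) oa.
Qed.

Definition decides_opens c := forall t, open t -> c <= t \/ c `&` t = \bot.

Lemma wlc_le_decides_opens c y : decides_opens c ->
  weakly_locally_closed box y -> y <= c -> y != \bot -> y = c.
Proof.
move=> dec_c [s [k [[S [So [_ [lbs glbs]]] ck ->]]]] yc ny.
apply/le_anti; rewrite yc /= lexI; apply/andP; split.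
- apply: glbs => // t St; case: (dec_c t (So t St)) => // disj.
  by move: ny; rewrite -lex0 -disj lexI yc (le_trans (leIl _ _) (lbs t St)).
- case: (dec_c (~` k) (closed_open_compl ck)) => [cnk|disj].
  + by move: ny; rewrite (le_le_compl_eq0 (leIr _ _) (le_trans yc cnk)) eqxx.
  + by rewrite -[k]complK -disj_leC disj.
Qed.

Lemma decides_opens_atom c : T0_algebra box -> c != \bot -> decides_opens c ->
  atom c.
Proof.
move=> T0 nc dec_c; split=> // z zc; case: (eqVneq z \bot) => [->|nz]; [by left|right].
have [S [S_wlc [_ [ubz lubz]]]] := T0 z.
have [[y [Sy ny]]|allS0] := classic (exists y, S y /\ y != \bot).
- have yc := le_trans (ubz y Sy) zc.
  rewrite -(wlc_le_decides_opens dec_c (S_wlc y Sy) yc ny) in zc *.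
  by apply/le_anti; rewrite zc (ubz y Sy).
- case/negP: nz; rewrite -lex0; apply: lubz => // t St.
  by rewrite lex0; apply: NNPP => /negP tn0; apply: allS0; exists t.
Qed.

Section Slicing.
Variables (F : M -> Prop) (a b : M).
Hypotheses (primeF : prime_filter_O box F) (nFa : ~ F a) (Fb : F b)
  (cov_ab : covered_O box a b).
Local Notation gap := (b `&` ~` a).

Lemma open_filter u : F u -> open u.
Proof. by case: primeF => [[Fo _ _ _] _ _]; exact: Fo. Qed.

Lemma covered_join_meet u : open u -> a `|` (b `&` u) = a \/ a `|` (b `&` u) = b.
Proof.
case: cov_ab => oa ob ab nomid ou; set w := a `|` (b `&` u).
have ow : open w by apply: openU => //; exact: openI.
have aw : a <= w by exact: leUl.
have wb : w <= b by rewrite leUx (ltW ab) leIl.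
case: (eqVneq w a) => [|nwa]; [by left | right].
apply: NNPP => nwb; apply: (nomid w ow); split; first by rewrite lt_def nwa aw.
by rewrite lt_def wb andbT; apply/eqP => /esym.
Qed.

Lemma filter_gap_le u : F u -> gap <= u.
Proof.
case: primeF => [[_ _ Fup FI] _ _] Fu; case: (cov_ab) => oa ob _ _.
have ou := open_filter Fu; have ow := openU oa (openI ob ou).
have Fw := Fup _ _ (FI _ _ Fb Fu) ow (leUr _ _).
case: (covered_join_meet ou) => [ewa|ewb]; first by rewrite ewa in Fw.
rewrite -[X in X `&` _]ewb meetUl meetxC join0x.
exact: le_trans (leIl _ _) (leIr _ _).
Qed.

Lemma nfilter_gap_disj u : open u -> ~ F u -> gap `&` u = \bot.
Proof.
case: primeF => [[_ _ Fup _] _ Fprime] ou nFu; case: (cov_ab) => oa ob _ _.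
case: (covered_join_meet ou) => [ewa|ewb].
  have bua : b `&` u <= a by apply/join_idPl.
  apply/eqP; rewrite -lex0 meetAC.
  by apply: le_trans (leI2 bua (lexx _)) _; rewrite meetxC.
have lub_w : is_lub_in open (fun t => t = a \/ t = b `&` u) (a `|` (b `&` u)).
  split; first exact: openU oa (openI ob ou).
  split; first by move=> t [->|->]; [exact: leUl | exact: leUr].
  by move=> v _ ubv; rewrite leUx !ubv; auto.
have Fw : F (a `|` (b `&` u)) by rewrite ewb.
case: (Fprime _ _ _ oa (openI ob ou) lub_w Fw) => // Fbu.
by case: nFu; apply: Fup Fbu ou (leIr _ _).
Qed.

Lemma gap_neq0 : gap != \bot.
Proof.
case: cov_ab => _ _ ab _; apply/negP => /eqP gap0.
have : b <= ~` ~` a by rewrite -disj_leC gap0.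
by rewrite complK (lt_geF ab).
Qed.

Lemma filter_gapE u : open u -> F u <-> gap <= u.
Proof.
move=> ou; split; first exact: filter_gap_le.
move=> gu; apply: NNPP => nFu; move: gap_neq0.
by rewrite -(meet_idPl gu) nfilter_gap_disj ?eqxx.
Qed.

Lemma gap_decides_opens : decides_opens gap.
Proof.
move=> t ot; have [Ft|nFt] := classic (F t); first by left; exact: filter_gap_le.
by right; exact: nfilter_gap_disj.
Qed.

Lemma gap_locally_closed : locally_closed box gap.
Proof.
case: cov_ab => oa ob _ _; exists b, (~` a).
by rewrite ob dia_compl_open.
Qed.

End Slicing.

Lemma slicing_theta_atom F : T0_algebra box -> slicing box F ->
  exists x, atom_D box x /\ theta box x = F.
Proof.
move=> T0 [primeF [a [b [Fb _ nFa cov]]]]; exists (b `&` ~` a); split.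
  split; last exact: gap_locally_closed.
  exact: decides_opens_atom T0 (gap_neq0 cov) (gap_decides_opens primeF nFa Fb cov).
apply: functional_extensionality => u; apply: propositional_extensionality.
split => [[ou gu]|Fu]; first exact/(filter_gapE primeF nFa Fb cov ou).
have ou := open_filter primeF Fu.
by split => //; apply/(filter_gapE primeF nFa Fb cov ou).
Qed.

Lemma theta_inj x y : atom_D box x -> atom y -> theta box y = theta box x -> y = x.
Proof.
move=> [atom_x [p [q ex]]] atom_y exy.
have thetaE u : open u -> x <= u <-> y <= u.
  move=> ou; split => le_u.
  - by have [] : theta box y u by rewrite exy.
  - by have [] : theta box x u by rewrite -exy.
have yp : y <= box p by apply/thetaE; [exact: open_box | rewrite ex leIl].
have yq : y <= dia box q.
  case: (atom_le_or_disj (dia box q) atom_y) => //; rewrite meetC => /disj_le_compl.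
  move=> /(thetaE _ (open_compl_dia q)) xnq.
  by case: (atom_not_le_compl atom_x _ xnq); rewrite ex leIr.
have yx : y <= x by rewrite ex lexI yp yq.
case: atom_x => _ /(_ y yx) [y0|//].
by case: atom_y; rewrite y0 eqxx.
Qed.

Lemma theta_pt_openE x u : atom x -> open u ->
  (cp_filter box (theta box x) /\ theta box x u) <-> Defs.eta u x.
Proof.
move=> atom_x ou; split => [[_ [_ xu]] | [_ xu]]; first by split.
by split; [exact: theta_cp | split].
Qed.

Lemma theta_continuous W : subspace_open (pt_open box) (slicing box) W ->
  subspace_open (at_open box) (atom_D box) (fun x => atom_D box x /\ W (theta box x)).
Proof.
move=> [V [[u [ou HV]] HW]]; exists (Defs.eta u); split; first by exists u.
move=> x; split => [[Dx /HW [/HV Vx _]]|[ux Dx]].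
  by split => //; apply/(theta_pt_openE (proj1 Dx) ou).
split => //; apply/HW; split; last exact: theta_slicing.
exact/HV/(theta_pt_openE (proj1 Dx) ou).
Qed.

Lemma theta_open U : T0_algebra box -> subspace_open (at_open box) (atom_D box) U ->
  subspace_open (pt_open box) (slicing box) (fun P => exists x, U x /\ theta box x = P).
Proof.
move=> T0 [V [[u [ou HV]] HU]]; exists (fun P => cp_filter box P /\ P u).
split; first by exists u.
move=> P; split => [[x [/HU [/HV Vx Dx] <-]]|[[_ Pu] sP]].
  by split; [exact/(theta_pt_openE (proj1 Dx) ou) | exact: theta_slicing].
have [x [Dx thx]] := slicing_theta_atom T0 sP; exists x; split => //.
apply/HU; split => //; apply/HV/(theta_pt_openE (proj1 Dx) ou).
by split; [exact: theta_cp (proj1 Dx) | rewrite thx].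
Qed.

End MTAlgebra.
End BooleanAlgebra.

Theorem theorem5p5 (d : Order.disp_t) (M : ctbDistrLatticeType d) (box : M -> M) :
  is_MT_algebra box -> T0_algebra box ->
  homeomorphism_between
    (subspace_open (at_open box) (atom_D box)) (atom_D box)
    (subspace_open (pt_open box) (slicing box)) (slicing box)
    (theta box)
  /\ (forall x : M, atom_D box x -> slicing box (theta box x))
  /\ (forall F : M -> Prop, slicing box F ->
        exists x : M, [/\ atom_D box x, theta box x = F &
          forall y : M, atom_D box y -> theta box y = F -> y = x]).
Proof.
move=> MT T0; have slicing_theta := theta_slicing MT.
split; last split => // F sF.
  split => //.
  - by move=> x y Dx Dy; exact: (theta_inj MT Dy (proj1 Dx)).
  - by move=> F sF; have [x [Dx thx]] := slicing_theta_atom MT T0 sF; exists x.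
  - exact: (theta_continuous MT).
  - by move=> U oU _; exact: (theta_open MT T0 oU).
have [x [Dx thx]] := slicing_theta_atom MT T0 sF; exists x; split => // y Dy thy.
by apply: (theta_inj MT Dx (proj1 Dy)); rewrite thy thx.
Qed.
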